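(* Let $m\ge 2$ and $1\le\ell<m$, and let $0<\varepsilon<m-\ell$. There is no rule $\mathcal{F}$ that takes an $\ell$-truncated election and returns a single candidate such that, for every election $E$, $\mathrm{sc}_{\mathrm{MM}}(\mathcal{F}(\mathrm{trunc}(E,\ell)))\ge\frac{1}{m-\ell-\varepsilon}\max_{c\in C}\mathrm{sc}_{\mathrm{MM}}(c)$. In other words, no algorithm working on $\ell$-truncated ballots is a $\frac{1}{m-\ell-\varepsilon}$-approximation of the Minimax rule.
   Context: An election consists of a set $V$ of $n$ voters and a set $C$ of $m$ candidates; each voter $v$ has a strict linear order $\succ_v$ over $C$. For $c,c'\in C$, $\mathrm{sc}_{\mathrm{MM}}(c,c')=|\{v: c\succ_v c'\}|$ and $\mathrm{sc}_{\mathrm{MM}}(c)=\min_{c'\neq c}\mathrm{sc}_{\mathrm{MM}}(c,c')$; the Minimax rule selects candidates maximizing $\mathrm{sc}_{\mathrm{MM}}$. $\mathrm{trunc}(E,\ell)$ is the partial election in which each voter reveals only the ordered list of her top $\ell$ candidates. *)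

From HB Require Import structures.
From mathcomp Require Import all_boot all_order all_algebra all_fingroup.
Open Scope nat_scope.
Set Implicit Arguments. Unset Strict Implicit. Unset Printing Implicit Defensive.

(* A vote (strict linear order over the candidates 'I_m) is a permutation
   s : {perm 'I_m}: s i is the candidate ranked at position i (0 = top). *)
Definition vote (m : nat) := {perm 'I_m}.
Definition election (m : nat) := seq (vote m).

Definition prefers m (s : vote m) (c c' : 'I_m) : bool :=
  (s^-1)%g c < (s^-1)%g c'.

Definition scMM2 m (E : election m) (c c' : 'I_m) : nat :=
  count (fun s => prefers s c c') E.

(* sc_MM(c) = min_{c' <> c} sc_MM(c, c')  (the neutral element size E is an
   upper bound of every pairwise score, and the range is nonempty for m >= 2) *)
Definition scMM m (E : election m) (c : 'I_m) : nat :=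
  \big[minn/size E]_(c' | c' != c) scMM2 E c c'.

Definition trunc_vote m (s : vote m) (l : nat) : seq 'I_m :=
  [seq s i | i : 'I_m <- enum 'I_m & (nat_of_ord i < l)%N].
Definition trunc m (E : election m) (l : nat) : seq (seq 'I_m) :=
  [seq trunc_vote s l | s <- E].

From HB Require Import structures.
From mathcomp Require Import all_boot all_order all_algebra all_fingroup.
From mathcomp Require Import zify lra.
Import Order.TTheory GRing.Theory Num.Theory.
Set Implicit Arguments. Unset Strict Implicit. Unset Printing Implicit Defensive.

(* Identify the candidates with Z/m and let voter j (one voter
   per j in Z/m) rank the candidates cyclically j, j+1, ..., j-1.  Run the
   rule F on the l-truncation of this "cyclic" election; say it returns c,
   and put w := c - 1.  Now modify every ballot in which w is hidden (ranked
   at position >= l) by swapping w into position l.  Hidden positions are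
   untouched, so the truncated profile, hence F's answer c, is unchanged.
   In the new election w beats every other candidate c' in each of the m - l
   ballots hiding c', so sc_MM(w) >= m - l; while c = w + 1 is ranked above w
   only by the voter j = c, so sc_MM(c) <= 1.  The ratio is thus at least
   m - l > m - l - eps, contradicting the approximation guarantee. *)

(* A ballot is conveniently described by its rank function r (r x is the
   position of candidate x); the corresponding vote is r^-1. *)
Lemma prefers_rank m (r : {perm 'I_m}) (x y : 'I_m) :
  prefers (r^-1)%g x y = (r x < r y)%N.
Proof. by rewrite /prefers invgK. Qed.

Lemma scMM_le_pair m (E : election m) (c c' : 'I_m) :
  c' != c -> (scMM E c <= scMM2 E c c')%N.
Proof.
move=> hc'; rewrite /scMM -minEnat.
exact: (@bigmin_le_cond _ _ _ (size E) c' (fun d => d != c) (scMM2 E c) hc').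
Qed.

Lemma scMM_ge m (E : election m) (c : 'I_m) (k : nat) :
  (k <= size E)%N -> (forall c', c' != c -> k <= scMM2 E c c')%N ->
  (k <= scMM E c)%N.
Proof.
move=> hk hpair; rewrite /scMM -minEnat.
exact: (@le_bigmin _ _ _ _ (scMM2 E c) (size E) k (fun d => d != c)).
Qed.

Lemma trunc_vote_swap_hidden m (r : {perm 'I_m}) (p q : 'I_m) (l : nat) :
  (l <= p)%N -> (l <= q)%N ->
  trunc_vote (r * tperm p q)^-1%g l = trunc_vote r^-1%g l.
Proof.
move=> hp hq; apply/eq_in_map => i; rewrite mem_filter => /andP[hi _].
rewrite invMg permM tpermV tpermD //; apply/eqP => hE; move: hi; rewrite -hE.
- by rewrite ltnNge hp.
- by rewrite ltnNge hq.
Qed.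

Definition promote m (L : 'I_m) (r : {perm 'I_m}) (w : 'I_m) : {perm 'I_m} :=
  if (L <= r w)%N then (r * tperm (r w) L)%g else r.

Lemma trunc_vote_promote m (L : 'I_m) (r : {perm 'I_m}) (w : 'I_m) :
  trunc_vote (promote L r w)^-1%g L = trunc_vote r^-1%g L.
Proof. by rewrite /promote; case: ifP => // hw; exact: trunc_vote_swap_hidden. Qed.

Lemma promote_beats_hidden m (L : 'I_m) (r : {perm 'I_m}) (w c : 'I_m) :
  c != w -> (L <= r c)%N -> prefers (promote L r w)^-1%g w c.
Proof.
move=> hcw hc; rewrite prefers_rank /promote.
case: ifP => hw; last by move/negbT: hw; rewrite -ltnNge => hw; exact: leq_trans hc.
rewrite !permM tpermL.
have hne : r c != r w by rewrite (inj_eq perm_inj).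
case: tpermP => [hE|hE|/eqP h1 /eqP h2].
- by rewrite hE eqxx in hne.
- have : nat_of_ord (r w) != L by rewrite -hE (inj_eq val_inj) eq_sym.
  by move: hw; lia.
- have : nat_of_ord (r c) != L by rewrite (inj_eq val_inj).
  by move: hc; lia.
Qed.

Lemma promote_pref_w m (L : 'I_m) (r : {perm 'I_m}) (w y : 'I_m) :
  prefers (promote L r w)^-1%g y w -> (r y < r w)%N.
Proof.
have [->|hyw] := eqVneq y w; first by rewrite prefers_rank ltnn.
rewrite prefers_rank /promote; case: ifP => // hw; rewrite !permM tpermL.
have hne : r y != r w by rewrite (inj_eq perm_inj).
case: tpermP => [hE|hE|_ /eqP hyL].
- by rewrite hE eqxx in hne.
- move=> _; have : nat_of_ord (r y) != nat_of_ord (r w) by [].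
  by rewrite hE; move: hw; lia.
- by move: hw hyL; rewrite -(inj_eq val_inj) /=; lia.
Qed.

Local Open Scope ring_scope.

Definition cyclic_rank n (j : 'I_n.+2) : {perm 'I_n.+2} := perm (@addIr _ (- j)).

Lemma cyclic_rankE n (j x : 'I_n.+2) : cyclic_rank j x = x - j.
Proof. by rewrite permE. Qed.

Lemma val_succ_ord n (y : 'I_n.+2) : y + 1 != 0 -> nat_of_ord (y + 1) = y.+1.
Proof.
case: y => y hy; rewrite -val_eqE /= (modn_small (isT : (1 < n.+2)%N)) addn1.
have [->|hwrap] := eqVneq y.+1 n.+2; first by rewrite modnn.
by rewrite modn_small //; lia.
Qed.

Lemma cyclic_rank_succ n (j x : 'I_n.+2) :
  (cyclic_rank j (x + 1)%R < cyclic_rank j x)%N -> j = x + 1.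
Proof.
move=> h; apply/eqP; apply: contraLR h => hj; rewrite -leqNgt.
have hsucc : cyclic_rank j (x + 1) = cyclic_rank j x + 1
  by rewrite !cyclic_rankE addrAC.
have hnz : cyclic_rank j x + 1 != 0 by rewrite -hsucc cyclic_rankE subr_eq0 eq_sym.
by rewrite hsucc val_succ_ord.
Qed.

Lemma count_iota_geq (a k : nat) : count (fun i => a <= i)%N (iota 0 k) = (k - a)%N.
Proof.
elim: k => [|k IH] //; rewrite -addn1 iotaD count_cat IH /= add0n addn0.
by case: (leqP a k) => h; rewrite ?h; lia.
Qed.

Lemma count_cyclic_hidden n (k : nat) (c : 'I_n.+2) :
  count (fun j : 'I_n.+2 => k <= cyclic_rank j c)%N (enum 'I_n.+2) = (n.+2 - k)%N.
Proof.
rewrite -sum1_count big_enum_cond /=.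
rewrite (reindex_inj (h := fun i => c - i)); last by move=> x y /= /addrI /oppr_inj.
under eq_bigl => i do rewrite cyclic_rankE opprB addrC subrK.
by rewrite -(big_mkord (fun i => k <= i)%N (fun _ => 1%N)) sum1_count count_iota_geq.
Qed.

Definition cyclic_election n : election n.+2 :=
  [seq (cyclic_rank j)^-1%g | j <- enum 'I_n.+2].

Definition promoted_election n (L w : 'I_n.+2) : election n.+2 :=
  [seq (promote L (cyclic_rank j) w)^-1%g | j <- enum 'I_n.+2].

Lemma trunc_promoted_election n (L w : 'I_n.+2) :
  trunc (promoted_election L w) L = trunc (cyclic_election n) L.
Proof.
rewrite /trunc -!map_comp; apply/eq_map => j /=; exact: trunc_vote_promote.
Qed.

Lemma scMM_promoted_w n (L w : 'I_n.+2) :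
  (n.+2 - L <= scMM (promoted_election L w) w)%N.
Proof.
apply: scMM_ge => [|c' hc'].
  by rewrite size_map size_enum_ord leq_subr.
rewrite /scMM2 count_map -(count_cyclic_hidden L c').
by apply: sub_count => j /= hj; exact: promote_beats_hidden.
Qed.

(* Its successor w + 1 beats w in at most one ballot, so scores at most 1. *)
Lemma scMM_promoted_succ n (L w : 'I_n.+2) :
  (scMM (promoted_election L w) (w + 1)%R <= 1)%N.
Proof.
have hw : w != w + 1.
  rewrite -subr_eq0 opprD addrA subrr sub0r oppr_eq0.
  by rewrite -(inj_eq val_inj).
apply: leq_trans (scMM_le_pair _ hw) _.
rewrite /scMM2 count_map.
apply: (@leq_trans (count (pred1 (w + 1)) (enum 'I_n.+2))).
  apply: sub_count => j /= /promote_pref_w /cyclic_rank_succ ->; exact: eqxx.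
by rewrite count_uniq_mem ?enum_uniq // mem_enum.
Qed.

Lemma no_approx_ratio (R : realFieldType) (d M s : nat) (eps : R) :
  0 < eps -> eps < d%:R -> (d <= M)%N -> (s <= 1)%N ->
  ~ M%:R / (d%:R - eps) <= s%:R.
Proof.
move=> heps0 heps1 hdM hs.
have hpos : 0 < d%:R - eps by rewrite subr_gt0.
rewrite ler_pdivrMr // => h.
have hM : d%:R <= M%:R :> R by rewrite ler_nat.
have hs' : s%:R <= 1%:R :> R by rewrite ler_nat.
have hs0 : 0 <= s%:R :> R by [].
nra.
Qed.

Theorem theorem7 (R : realFieldType) (m l : nat) (eps : R)
  (hm : (2 <= m)%N) (hl1 : (1 <= l)%N) (hlm : (l < m)%N)
  (heps0 : 0 < eps) (heps1 : eps < m%:R - l%:R) :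
  ~ exists F : seq (seq 'I_m) -> 'I_m,
      forall E : election m,
        (\max_(c : 'I_m) scMM E c)%:R / (m%:R - l%:R - eps)
          <= (scMM E (F (trunc E l)))%:R.
Proof.
case: m hm hlm heps1 => [|[|n]] // _ hlm heps1 [F HF].
pose L : 'I_n.+2 := Ordinal hlm.
pose c := F (trunc (cyclic_election n) l).
pose E := promoted_election L (c - 1).
have hd : (n.+2 - l)%:R = n.+2%:R - l%:R :> R by rewrite natrB // ltnW.
have hmax : (n.+2 - l <= \max_(c' : 'I_n.+2) scMM E c')%N.
  exact: leq_trans (scMM_promoted_w L (c - 1)) (leq_bigmax _).
have hc : (scMM E c <= 1)%N.
  by rewrite -[in scMM _ c](subrK 1 c); exact: scMM_promoted_succ.
have := HF E; rewrite (trunc_promoted_election L (c - 1)) -/c -hd.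
by apply: no_approx_ratio hmax hc; rewrite ?hd.
Qed.
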